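(* Assume the growth hypotheses described in the context, and in addition that $\int|x|^p\mu(dx)<\infty$ and that $c_1,c_2,a_+,a_-$ have growth of order at most $p$ (i.e. $|c_1(x)|+a_+(x)+a_-(x)\le M(1+|x|^p)$ and $|c_2(y)|\le M(1+|y|^p)$ for some $M$). Then there is a constant $K$ such that for every $f\in L^1(\mu)$ for which $f^c,f^{cc}$ are well defined and $f^c\in L^1(\nu)$, $$|f^{cc}(x)|\le\mu(f^-)+\nu((f^c)^-)+K(1+|x|^p),\qquad x\in\mathsf{X},$$ with $K$ independent of $f$. If $c$ is replaced by $c/\varepsilon$ with $\varepsilon\in(0,1)$ (and $c_1,c_2,\hat c,a_\pm,K^i_\pm$ correspondingly divided by $\varepsilon$), the corresponding bound holds with constant $\tilde K:=\varepsilon^{-\max\{p/\alpha,1\}}K$, where $\alpha:=\min_i\tilde\alpha_i=p-\max_i\beta_i$.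
   Context: $(\mathsf{X},d_{\mathsf{X}})$, $(\mathsf{Y},d_{\mathsf{Y}})$ are Polish metric spaces with reference points $x_0,y_0$; $|x|:=d_{\mathsf{X}}(x,x_0)$, $|y|:=d_{\mathsf{Y}}(y,y_0)$. $\mu\in\mathcal{P}(\mathsf{X})$, $\nu\in\mathcal{P}(\mathsf{Y})$, $c:\mathsf{X}\times\mathsf{Y}\to\mathbb{R}$ measurable; $\mu(h):=\int h\,d\mu$, $h^-=\max(-h,0)$. Conjugates: for measurable $f:\mathsf{X}\to[-\infty,\infty]$, $f^c(y):=-\log\int e^{f(x)-c(x,y)}\mu(dx)$ and $f^{cc}(x):=-\log\int e^{f^c(y)-c(x,y)}\nu(dy)$ (when the integrals are well defined). Growth hypotheses: fix $p>0$ with $\int e^{\lambda|y|^p}\nu(dy)<\infty$ for some $\lambda>0$; fix $N\ge0$ and $\alpha_i\in[0,p]$, $\beta_i\in[0,p)$ with $\alpha_i+\beta_i\le p$ ($1\le i\le N$), and set $\tilde\alpha_i:=p-\beta_i$. The cost has the form $c(x,y)=c_1(x)+c_2(y)+\hat c(x,y)$ with $c_1\in L^1(\mu)$, $c_2\in L^1(\nu)$ and $-a_-(x)-\sum_{i=1}^NK_-^i|x|^{\alpha_i}|y|^{\beta_i}\le\hat c(x,y)\le a_+(x)+\sum_{i=1}^NK_+^i|x|^{\alpha_i}|y|^{\beta_i}$, where $K_\pm^i\ge0$ and $a_\pm\ge0$ are measurable with $A_+:=\int a_+d\mu<\infty$. *)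

From HB Require Import structures.
From mathcomp Require Import all_boot all_order all_algebra.
From mathcomp Require Import all_classical all_reals all_analysis.
Set Implicit Arguments. Unset Strict Implicit. Unset Printing Implicit Defensive.
Import Order.TTheory GRing.Theory Num.Theory.
Local Open Scope classical_set_scope.
Local Open Scope ring_scope.

Section MetricDefs.
Context {R : realType} {T : Type}.
Variable dist : T -> T -> R.

Definition is_metric : Prop :=
  [/\ (forall x y, 0 <= dist x y),
      (forall x y, dist x y = 0 <-> x = y),
      (forall x y, dist x y = dist y x) &
      (forall x y z, dist x z <= dist x y + dist y z)].

Definition metric_open (A : set T) : Prop :=
  forall x, A x -> exists2 r : R, 0 < r & forall y, dist x y < r -> A y.

Definition metric_complete : Prop :=
  forall u : nat -> T,
    (forall e : R, 0 < e -> exists N, forall m n, (N <= m)%N -> (N <= n)%N ->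
        dist (u m) (u n) < e) ->
    exists l, forall e : R, 0 < e -> exists N, forall n, (N <= n)%N ->
        dist (u n) l < e.

Definition metric_separable : Prop :=
  exists u : nat -> T, forall x (e : R), 0 < e -> exists n, dist x (u n) < e.
End MetricDefs.

Definition polish_metric_space {R : realType} {d} (T : measurableType d)
    (dist : T -> T -> R) : Prop :=
  [/\ is_metric dist, metric_complete dist, metric_separable dist &
      (@measurable d T) = <<s metric_open dist >>].

Local Open Scope ereal_scope.

Definition cconj {R : realType} {d1 d2} {X : measurableType d1}
    {Y : measurableType d2} (mu : {measure set X -> \bar R})
    (c : X * Y -> R) (f : X -> R) : Y -> \bar R :=
  fun y => - lne (\int[mu]_x (expR (f x - c (x, y)))%:E).

Definition cconj2 {R : realType} {d1 d2} {X : measurableType d1}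
    {Y : measurableType d2} (nu : {measure set Y -> \bar R})
    (c : X * Y -> R) (g : Y -> \bar R) : X -> \bar R :=
  fun x => - lne (\int[nu]_y expeR (g y - (c (x, y))%:E)).

Definition negpart {R : realType} (r : \bar R) : \bar R := maxe (- r) 0.

From HB Require Import structures.
From mathcomp Require Import all_boot all_order all_algebra.
From mathcomp Require Import all_classical all_reals all_analysis.
From mathcomp Require Import measurable_realfun.
From mathcomp Require Import ring lra.
Import Order.TTheory GRing.Theory Num.Theory.
Local Open Scope ring_scope.

(* Scale the cost by s >= 1 (s = 1, resp. s = 1/eps).  By Jensen's inequality,
   -log E[exp F] <= E[phi^-] + E[h] whenever phi - h <= F; with the growth
   bounds on the cost this bounds f^c from above (integrating over mu) and f^cc
   from above (integrating over nu).  For the lower bound on f^cc, the upper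
   bound on f^c is put in the exponent: Young's inequality absorbs each cross
   term |x|^alpha_i |y|^beta_i into a small multiple of |y|^p, controlled by the
   exponential moment of nu, at the price of a factor s^(p/(p-beta_i)) <=
   s^max(p/alpha, 1) in the constant. *)

Lemma measurable_dist_to {R : realType} {d} {T : measurableType d}
    {dist : T -> T -> R} (z : T) :
  polish_metric_space dist -> measurable_fun setT (fun x => dist x z).
Proof.
case=> [[_ _ dC dT] _ _ mE].
apply: (measurability (@measurable_realfun.RGenInftyO.G R)).
  exact: measurable_realfun.RGenInftyO.measurableE.
move=> _ [_ [r ->] <-]; rewrite setTI mE.
apply: sub_sigma_algebra => x /= hx.
exists (r - dist x z); first by rewrite subr_gt0.
move=> y hy /=; rewrite in_itv /=.
apply: le_lt_trans (dT y x z) _; rewrite (dC y x) -ltrBrDr; exact: hy.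
Qed.

Section probability_integral.
Context {R : realType} {d} {T : measurableType d} (P : probability T R).
Local Open Scope ereal_scope.
Implicit Types (f g h F : T -> R).

Lemma integrable_EFin_cst (r : R) : P.-integrable setT (EFin \o cst r).
Proof. exact: finite_measure_integrable_cst. Qed.

Lemma Rintegral_cst_prob (r : R) : (\int[P]_x r)%R = r.
Proof.
have PT : (P : {measure set T -> \bar R}) setT = 1 := probability_setT P.
by rewrite Rintegral_cst // PT mulr1.
Qed.

Lemma integrableZl_EFin (k : R) {f} : P.-integrable setT (EFin \o f) ->
  P.-integrable setT (EFin \o (fun x => k * f x)%R).
Proof. exact: integrableZl. Qed.

Lemma integrableD_EFin {f g} : P.-integrable setT (EFin \o f) ->
  P.-integrable setT (EFin \o g) -> P.-integrable setT (EFin \o (f \+ g)%R).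
Proof. exact: integrableD. Qed.

Lemma integrableB_EFin {f g} : P.-integrable setT (EFin \o f) ->
  P.-integrable setT (EFin \o g) -> P.-integrable setT (EFin \o (f \- g)%R).
Proof. exact: integrableB. Qed.

Lemma measurable_of_integrable {f} : P.-integrable setT (EFin \o f) ->
  measurable_fun setT f.
Proof. by move=> /(measurable_int P)/measurable_EFinP. Qed.

Lemma Rintegral_affine (k1 k2 : R) a h :
  P.-integrable setT (EFin \o a) -> P.-integrable setT (EFin \o h) ->
  (\int[P]_x (k1 + a x + k2 * h x) = k1 + \int[P]_x a x + k2 * \int[P]_x h x)%R.
Proof.
move=> ia ih; have ik1 := integrable_EFin_cst k1.
have ia1 : P.-integrable setT (EFin \o (fun x => k1 + a x)%R).
  exact: integrableD_EFin.
rewrite RintegralD //; last exact: integrableZl_EFin.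
by rewrite RintegralD // RintegralZl // Rintegral_cst_prob.
Qed.

Lemma integrable_ge0_lty f : measurable_fun setT f -> (forall x, 0 <= f x)%R ->
  \int[P]_x (f x)%:E < +oo -> P.-integrable setT (EFin \o f).
Proof.
move=> mf f0 lty; apply/integrableP; split; first exact/measurable_EFinP.
by rewrite (eq_integral (fun x => (f x)%:E)) // => x _; rewrite abse_EFin ger0_norm.
Qed.

(* Jensen's inequality, from the tangent line of [expR] at the mean. *)
Lemma expR_Rintegral_le {g} : P.-integrable setT (EFin \o g) ->
  (expR (\int[P]_x g x)%R)%:E <= \int[P]_x (expR (g x))%:E.
Proof.
move=> ig; set m := (\int[P]_x g x)%R.
have [->|neq] := eqVneq (\int[P]_x (expR (g x))%:E) +oo; first exact: leey.
have ieg : P.-integrable setT (EFin \o (expR \o g)).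
  apply: integrable_ge0_lty; last by rewrite ltey.
    exact/measurableT_comp/measurable_of_integrable.
  by move=> x; exact: expR_ge0.
have igm : P.-integrable setT (EFin \o (fun x => 1 + (g x - m))%R).
  by apply: integrableD_EFin; [|apply: integrableB_EFin]; rewrite ?integrable_EFin_cst.
have itan := integrableZl_EFin (expR m) igm.
have -> : \int[P]_x (expR (g x))%:E = (\int[P]_x expR (g x))%R%:E.
  by rewrite fineK //; exact: integrable_fin_num.
have -> : expR m = (\int[P]_x (expR m * (1 + (g x - m))))%R.
  rewrite RintegralZl // RintegralD ?integrable_EFin_cst //; last first.
    by apply: integrableB_EFin; rewrite ?integrable_EFin_cst.
  by rewrite RintegralB ?integrable_EFin_cst // !Rintegral_cst_prob subrr addr0 mulr1.
rewrite lee_fin; apply: le_Rintegral => // x _.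
rewrite -[X in (_ <= expR X)%R](subrK m) expRD mulrC.
by rewrite ler_wpM2r ?expR_ge0 // expR_ge1Dx.
Qed.

Lemma Rintegral_le_lne_integral_expR g F : P.-integrable setT (EFin \o g) ->
  measurable_fun setT F -> (forall x, g x <= F x)%R ->
  (\int[P]_x g x)%R%:E <= lne (\int[P]_x (expR (F x))%:E).
Proof.
move=> ig mF gF.
have mg := measurable_of_integrable ig.
have le_int : \int[P]_x (expR (g x))%:E <= \int[P]_x (expR (F x))%:E.
  apply: (@ge0_le_integral _ _ _ P setT measurableT).
  - by move=> x _; rewrite lee_fin expR_ge0.
  - exact/measurable_EFinP/measurableT_comp.
  - exact/measurable_EFinP/measurableT_comp.
  - by move=> x _; rewrite lee_fin ler_expR.
rewrite -[X in X%:E <= _]expRK -lne_EFin ?expR_gt0 // lee_lne ?in_itv /= ?leey ?andbT.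
- exact: le_trans (expR_Rintegral_le ig) le_int.
- by rewrite lee_fin expR_ge0.
- by apply: integral_ge0 => x _; rewrite lee_fin expR_ge0.
Qed.

Lemma integral_negpart_EFin f :
  \int[P]_x ((EFin \o f)^\- x) = \int[P]_x negpart (f x)%:E.
Proof. by apply: eq_integral => x _; rewrite funenegE. Qed.

Lemma integral_negpart_fin_num f : P.-integrable setT (EFin \o f) ->
  \int[P]_x negpart (f x)%:E \is a fin_num.
Proof.
move=> /(integrable_funeneg measurableT)/(integrable_fin_num measurableT).
by rewrite integral_negpart_EFin.
Qed.

Lemma integral_negpart_ge0 (G : T -> \bar R) : 0 <= \int[P]_x negpart (G x).
Proof. by apply: integral_ge0 => x _; rewrite /negpart le_max lexx orbT. Qed.

Lemma oppe_Rintegral_le_negpart f : P.-integrable setT (EFin \o f) ->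
  - (\int[P]_x f x)%R%:E <= \int[P]_x negpart (f x)%:E.
Proof.
move=> intf.
have fpos := integrable_fin_num measurableT (integrable_funepos measurableT intf).
have fneg := integrable_fin_num measurableT (integrable_funeneg measurableT intf).
have pos0 : 0 <= \int[P]_x ((EFin \o f)^\+ x).
  by apply: integral_ge0 => x _; exact: funepos_ge0.
rewrite fineK ?(integrable_fin_num measurableT intf) // integralE.
rewrite -integral_negpart_EFin -(fineK fpos) -(fineK fneg) -EFinB -EFinN lee_fin.
by move: pos0; rewrite -(fineK fpos) lee_fin; lra.
Qed.

Lemma oppe_lne_integral_expR_le phi h F :
  P.-integrable setT (EFin \o phi) -> P.-integrable setT (EFin \o h) ->
  measurable_fun setT F -> (forall x, phi x - h x <= F x)%R ->
  - lne (\int[P]_x (expR (F x))%:E) <=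
    \int[P]_x negpart (phi x)%:E + (\int[P]_x h x)%R%:E.
Proof.
move=> iphi ih mF le_F.
have iB := integrableB_EFin iphi ih.
apply: le_trans (_ : - (\int[P]_x (phi x - h x))%R%:E <= _).
  by rewrite leeN2; exact: Rintegral_le_lne_integral_expR.
rewrite RintegralB // EFinB oppeB // -EFinN.
by rewrite leeD2r // oppe_Rintegral_le_negpart.
Qed.

Lemma lne_integral_expR_le F g (b : R) :
  measurable_fun setT F -> P.-integrable setT (EFin \o (expR \o g)) ->
  (forall x, 0 <= g x)%R -> (forall x, F x <= b + g x)%R ->
  lne (\int[P]_x (expR (F x))%:E) <= (b + ln (\int[P]_x expR (g x))%R)%:E.
Proof.
move=> mF ieg g0 le_F.
set E := (\int[P]_x expR (g x))%R.
have E1 : (1 <= E)%R.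
  rewrite -[1%R]Rintegral_cst_prob; apply: le_Rintegral => //.
    exact: integrable_EFin_cst.
  by move=> x _; apply: le_trans (expR_ge1Dx _); rewrite lerDl.
have ieF : P.-integrable setT (EFin \o (fun x => expR b * expR (g x))%R).
  exact: integrableZl_EFin.
have le_int : \int[P]_x (expR (F x))%:E <= (expR b * E)%:E.
  rewrite -RintegralZl // fineK; last exact: integrable_fin_num.
  apply: (@ge0_le_integral _ _ _ P setT measurableT).
  - by move=> x _; rewrite lee_fin expR_ge0.
  - exact/measurable_EFinP/measurableT_comp.
  - exact: (measurable_int P ieF).
  - by move=> x _; rewrite lee_fin -expRD ler_expR.
have E0 : (0 < E)%R by exact: lt_le_trans ltr01 E1.
apply: le_trans (_ : lne (expR b * E)%:E <= _).
  rewrite lee_lne ?in_itv /= ?leey ?andbT //.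
    by apply: integral_ge0 => x _; rewrite lee_fin expR_ge0.
  by rewrite lee_fin mulr_ge0 ?expR_ge0 // ltW.
by rewrite lne_EFin ?mulr_gt0 ?expR_gt0 // lnM ?posrE ?expR_gt0 // expRK.
Qed.
End probability_integral.

Lemma cconj2E {R : realType} {d1 d2} {X : measurableType d1}
    {Y : measurableType d2} (nu : {measure set Y -> \bar R}) (c : X * Y -> R)
    (g : Y -> \bar R) x : (forall y, g y \is a fin_num) ->
  cconj2 nu c g x = (- lne (\int[nu]_y (expR (fine (g y) - c (x, y)))%:E))%E.
Proof.
move=> gfin; rewrite /cconj2; congr (- lne _)%E.
by apply: eq_integral => y _; rewrite -[g y](fineK (gfin y)).
Qed.

Section young.
Context {R : realType}.
Variables (del b p : R).
Hypotheses (del0 : 0 < del) (b0 : 0 <= b) (bp : b < p).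

(* The constant in Young's inequality [w y^b <= del y^p + C(w)] for the
   conjugate exponents [p/b] and [p/(p-b)]. *)
Definition young_const (w : R) := w * (w / del) `^ (b / (p - b)).

Let pb0 : 0 < p - b. Proof. by rewrite subr_gt0. Qed.
Let e0 : 0 <= b / (p - b). Proof. by rewrite divr_ge0 // ltW. Qed.

Lemma young_const_ge0 w : 0 <= w -> 0 <= young_const w.
Proof. by move=> w0; rewrite mulr_ge0 ?powR_ge0. Qed.

Lemma mul_powR_le_young (w y : R) : 0 <= w -> 0 <= y ->
  w * y `^ b <= del * y `^ p + young_const w.
Proof.
move=> w0 y0; have [small|big] := leP (w / del) (y `^ (p - b)).
- apply: (@le_trans _ _ (del * y `^ p)); first last.
    by rewrite lerDl young_const_ge0.
  apply: (@le_trans _ _ (del * y `^ (p - b) * y `^ b)).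
    by rewrite ler_wpM2r ?powR_ge0 // -ler_pdivrMl // mulrC.
  by rewrite -mulrA -powRD ?subrK // gt_eqF // (le_lt_trans b0 bp).
- apply: (@le_trans _ _ (young_const w)); last first.
    by rewrite lerDr mulr_ge0 ?powR_ge0 ?ltW.
  rewrite /young_const ler_wpM2l //.
  have -> : y `^ b = (y `^ (p - b)) `^ (b / (p - b)).
    by rewrite -powRrM mulrC divfK ?gt_eqF.
  by apply: ge0_ler_powR; rewrite ?nnegrE ?powR_ge0 ?divr_ge0 // ltW.
Qed.

Lemma young_const_le (w w' : R) : 0 <= w -> w <= w' ->
  young_const w <= young_const w'.
Proof.
move=> w0 ww'; have w'0 := le_trans w0 ww'.
apply: ler_pM; rewrite ?powR_ge0 //.
have del_ge0 := ltW del0.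
apply: ge0_ler_powR; rewrite ?nnegrE ?divr_ge0 ?(ltW pb0) //.
by apply: ler_wpM2r; rewrite // invr_ge0.
Qed.

Lemma young_constZ (k w : R) : 0 <= k -> 0 <= w ->
  young_const (k * w) = k `^ (p / (p - b)) * young_const w.
Proof.
move=> k0 w0; rewrite /young_const.
have -> : (k * w / del) `^ (b / (p - b)) = k `^ (b / (p - b)) * (w / del) `^ (b / (p - b)).
  by rewrite -mulrA powRM // divr_ge0 // ltW.
have -> : p / (p - b) = 1 + b / (p - b) by field; exact: lt0r_neq0.
have e1_neq0 : 1 + b / (p - b) != 0 by rewrite gt_eqF // ltr_wpDr.
by rewrite powRD ?powRr1 ?(negbTE e1_neq0) //; ring.
Qed.
End young.

Lemma powR_le1D (R : realType) (t a p : R) : 0 <= t -> 0 <= a <= p ->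
  t `^ a <= 1 + t `^ p.
Proof.
move=> t0 /andP[a0 ap]; have [t1|t1] := leP t 1.
- apply: (@le_trans _ _ 1); last by rewrite lerDl powR_ge0.
  apply: (@le_trans _ _ (1 `^ a)); last by rewrite powR1.
  by apply: ge0_ler_powR; rewrite ?nnegrE.
- by apply: (@le_trans _ _ (t `^ p)); rewrite ?lerDr // ler_powR // ltW.
Qed.

Lemma powR_max1_le1D (R : realType) (t r : R) : 0 <= t -> 0 <= r ->
  (Num.max 1 t) `^ r <= 1 + t `^ r.
Proof.
move=> t0 r0; have [t1|t1] := leP t 1; last by rewrite lerDr.
by rewrite powR1 lerDl powR_ge0.
Qed.

Section conjugate_bounds.
Context {R : realType} {d1 d2 : measure_display}
  {X : measurableType d1} {Y : measurableType d2}
  {dX : X -> X -> R} {dY : Y -> Y -> R} {x0 : X} {y0 : Y}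
  {mu : probability X R} {nu : probability Y R}
  {c : X * Y -> R} {c1 : X -> R} {c2 : Y -> R} {chat : X -> Y -> R}
  {p : R} {N : nat} {alpha beta Kp Km : 'I_N -> R} {ap am : X -> R}
  {lam M : R}.
Hypotheses (pX : polish_metric_space dX) (pY : polish_metric_space dY)
  (mc : measurable_fun setT c) (p_gt0 : 0 < p) (lam_gt0 : 0 < lam)
  (expPy_lty : (\int[nu]_y (expR (lam * dY y y0 `^ p))%:E < +oo)%E)
  (alpha_bnd : forall i, 0 <= alpha i <= p)
  (beta_bnd : forall i, 0 <= beta i < p)
  (alpha_beta : forall i, alpha i + beta i <= p)
  (Kp_ge0 : forall i, 0 <= Kp i) (Km_ge0 : forall i, 0 <= Km i)
  (ap_ge0 : forall x, 0 <= ap x) (am_ge0 : forall x, 0 <= am x)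
  (int_ap : mu.-integrable setT (EFin \o ap))
  (int_c1 : mu.-integrable setT (EFin \o c1))
  (int_c2 : nu.-integrable setT (EFin \o c2))
  (c_split : forall x y, c (x, y) = c1 x + c2 y + chat x y)
  (chat_ge : forall x y, - am x
     - \sum_(i < N) Km i * dX x x0 `^ alpha i * dY y y0 `^ beta i <= chat x y)
  (chat_le : forall x y, chat x y
     <= ap x + \sum_(i < N) Kp i * dX x x0 `^ alpha i * dY y y0 `^ beta i)
  (Px_lty : (\int[mu]_x (dX x x0 `^ p)%:E < +oo)%E)
  (c1_bnd : forall x, `|c1 x| + ap x + am x <= M * (1 + dX x x0 `^ p)).

Let Px x := dX x x0 `^ p.
Let Py y := dY y y0 `^ p.

Let dX_ge0 x : 0 <= dX x x0.
Proof. by case: pX => -[]. Qed.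

Let dY_ge0 y : 0 <= dY y y0.
Proof. by case: pY => -[]. Qed.

Let Px_ge0 x : 0 <= Px x. Proof. exact: powR_ge0. Qed.
Let Py_ge0 y : 0 <= Py y. Proof. exact: powR_ge0. Qed.

Let measurable_Px : measurable_fun setT Px.
Proof. exact: measurableT_comp (measurable_powR p) (measurable_dist_to x0 pX). Qed.

Let measurable_Py : measurable_fun setT Py.
Proof. exact: measurableT_comp (measurable_powR p) (measurable_dist_to y0 pY). Qed.

Let int_Px : mu.-integrable setT (EFin \o Px).
Proof. exact: integrable_ge0_lty. Qed.

Let expPy y := expR (lam * Py y).

Let int_expPy : nu.-integrable setT (EFin \o expPy).
Proof.
apply: integrable_ge0_lty => // [|y]; last exact: expR_ge0.
by apply: measurableT_comp => //; apply: measurableT_comp.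
Qed.

Let int_Py : nu.-integrable setT (EFin \o Py).
Proof.
apply: (le_integrable measurableT (g := EFin \o (fun y => lam^-1 * expPy y)));
  [exact/measurable_EFinP| |exact: integrableZl_EFin].
move=> y _; rewrite /comp !abse_EFin lee_fin !ger0_norm //; last first.
  by rewrite mulr_ge0 ?expR_ge0 // invr_ge0 ltW.
by rewrite ler_pdivlMl //; apply: le_trans (expR_ge1Dx _); rewrite lerDr.
Qed.

Let scaled_cost s (xy : X * Y) := s * c xy.

Let c_measurable_x s y : measurable_fun setT (fun x => s * c (x, y)).
Proof. by apply: measurableT_comp => //; exact: measurable_fun_pair1. Qed.

Let c_measurable_y s x : measurable_fun setT (fun y => s * c (x, y)).
Proof. by apply: measurableT_comp => //; exact: measurable_fun_pair2. Qed.

Let S y := \sum_(i < N) Kp i * dY y y0 `^ beta i.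
Let Ksum := \sum_(i < N) Kp i.

Let S_ge0 y : 0 <= S y.
Proof. by apply: sumr_ge0 => i _; rewrite mulr_ge0 ?powR_ge0. Qed.

Let Ksum_ge0 : 0 <= Ksum.
Proof. exact: sumr_ge0. Qed.

Let S_le y : S y <= Ksum * (1 + Py y).
Proof.
rewrite /Ksum mulr_suml; apply: ler_sum => i _; apply: ler_wpM2l => //.
by apply: powR_le1D => //; case/andP: (beta_bnd i) => -> /ltW ->.
Qed.

Lemma cost_le x y : c (x, y) <= c1 x + c2 y + ap x + S y * (1 + Px x).
Proof.
rewrite c_split; have := chat_le x y.
suff : \sum_(i < N) Kp i * dX x x0 `^ alpha i * dY y y0 `^ beta i
    <= S y * (1 + Px x) by lra.
rewrite /S mulr_suml; apply: ler_sum => i _.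
by rewrite mulrAC ler_wpM2l ?mulr_ge0 ?powR_ge0 // powR_le1D.
Qed.

Let I1 := \int[mu]_x (c1 x + ap x).
Let m1 := \int[mu]_x (1 + Px x).
Let mf (f : X -> R) := fine (\int[mu]_x negpart (f x)%:E)%E.

Let int_c1ap : mu.-integrable setT (EFin \o (c1 \+ ap)).
Proof. exact: integrableD_EFin. Qed.

Let int_1Px : mu.-integrable setT (EFin \o (fun x => 1 + Px x)).
Proof. exact: integrableD_EFin (integrable_EFin_cst _ _) int_Px. Qed.

Let m1_ge0 : 0 <= m1.
Proof. by apply: Rintegral_ge0 => x _; rewrite addr_ge0. Qed.

Lemma cconj_le (s : R) (f : X -> R) y : 0 <= s -> mu.-integrable setT (EFin \o f) ->
  (cconj mu (scaled_cost s) f y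
    <= \int[mu]_x negpart (f x)%:E + (s * (c2 y + I1 + S y * m1))%:E)%E.
Proof.
move=> s0 intf.
pose h x := c2 y + (c1 x + ap x) + S y * (1 + Px x).
have int_h : mu.-integrable setT (EFin \o h).
  apply: integrableD_EFin; last exact: integrableZl_EFin.
  exact: integrableD_EFin (integrable_EFin_cst _ _) int_c1ap.
have -> : s * (c2 y + I1 + S y * m1) = \int[mu]_x (s * h x).
  by rewrite RintegralZl // Rintegral_affine.
apply: oppe_lne_integral_expR_le => //; first exact: integrableZl_EFin.
- by apply: measurable_funB; [exact: measurable_of_integrable intf|exact: c_measurable_x].
- by move=> x; rewrite lerB // ler_wpM2l // /h; have := cost_le x y; lra.
Qed.

(* [del] is chosen so that the [N] Young remainders [del * Py y] add up to
   at most [lam * Py y], which is [nu]-exponentially integrable. *)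
Let del := lam / N.+1%:R.
Let del_gt0 : 0 < del. Proof. by rewrite divr_gt0. Qed.
Let yc i := young_const del (beta i) p.

Lemma sum_powR_le_young (w : 'I_N -> R) y : (forall i, 0 <= w i) ->
  \sum_(i < N) w i * dY y y0 `^ beta i <= lam * Py y + \sum_(i < N) yc i (w i).
Proof.
move=> w0; apply: le_trans (_ : \sum_(i < N) (del * Py y + yc i (w i)) <= _).
  apply: ler_sum => i _; have /andP[b0 bp] := beta_bnd i.
  exact: mul_powR_le_young.
rewrite big_split /= sumr_const card_ord lerD2r -mulr_natr mulrAC.
apply: ler_wpM2r => //.
by rewrite /del mulrAC ler_pdivrMr ?ltr0Sn // ler_pM2l // ler_nat.
Qed.

Let weight s x i := s * (Kp i * m1 + Km i * dX x x0 `^ alpha i).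

Let weight_ge0 s x i : 0 <= s -> 0 <= weight s x i.
Proof.
by move=> s0; rewrite mulr_ge0 // addr_ge0 // mulr_ge0 ?powR_ge0.
Qed.

Lemma cconj_sub_cost_le s f x y : 0 <= s -> mu.-integrable setT (EFin \o f) ->
  cconj mu (scaled_cost s) f y \is a fin_num ->
  fine (cconj mu (scaled_cost s) f y) - s * c (x, y)
    <= mf f + s * (I1 - c1 x + am x) + \sum_(i < N) yc i (weight s x i)
       + lam * Py y.
Proof.
move=> s0 intf fin.
have conj_le : fine (cconj mu (scaled_cost s) f y)
    <= mf f + s * (c2 y + I1 + S y * m1).
  rewrite -lee_fin EFinD fineK // fineK ?integral_negpart_fin_num //.
  exact: cconj_le.
have chat_s := ler_wpM2l s0 (chat_ge x y).
have sum_weight : s * (S y * m1)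
    + s * \sum_(i < N) Km i * dX x x0 `^ alpha i * dY y y0 `^ beta i
    = \sum_(i < N) weight s x i * dY y y0 `^ beta i.
  rewrite -mulrDr /S mulr_suml -big_split mulr_sumr.
  by apply: eq_bigr => i _ /=; rewrite /weight; ring.
have := sum_powR_le_young (weight s x) y (weight_ge0 s x ^~ s0).
rewrite c_split; nra.
Qed.

Let Bmax := \big[Num.max/0]_(i < N) beta i.
Let mexp := Num.max (p / (p - Bmax)) 1.

Let mexp_ge i : p / (p - beta i) <= mexp.
Proof.
have /andP[_ bp] := beta_bnd i.
have Bp : Bmax < p by apply: bigmax_lt => // j _; case/andP: (beta_bnd j).
apply: le_trans (_ : p / (p - Bmax) <= _); last by rewrite le_max lexx.
rewrite ler_pM2l // lef_pV2 ?posrE ?subr_gt0 // lerB //.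
exact: le_bigmax.
Qed.

Let powR_le_mexp s q : 1 <= s -> q <= mexp -> s `^ q <= s `^ mexp.
Proof. by move=> s1 qm; rewrite ler_powR. Qed.

Let le_powR_mexp s : 1 <= s -> s <= s `^ mexp.
Proof.
move=> s1; rewrite -{1}(powRr1 (le_trans ler01 s1)) powR_le_mexp //.
by rewrite le_max lexx orbT.
Qed.

Let L i := Kp i * m1 + Km i.

Lemma young_weight_le s x i : 1 <= s ->
  yc i (weight s x i) <= s `^ mexp * (1 + Px x) * yc i (L i).
Proof.
move=> s1; have s0 := le_trans ler01 s1.
have /andP[a0 ale] := alpha_bnd i; have /andP[b0 bp] := beta_bnd i.
set v := Num.max 1 (dX x x0).
have v1 : 1 <= v by rewrite le_max lexx.
have v0 := le_trans ler01 v1.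
have va1 : 1 <= v `^ alpha i by rewrite -(powRr0 v) ler_powR.
have w_le : weight s x i <= (s * v `^ alpha i) * L i.
  rewrite /weight /L -mulrA ler_wpM2l // mulrDr lerD //.
    by rewrite ler_peMl // mulr_ge0.
  rewrite mulrC ler_wpM2r // ge0_ler_powR ?nnegrE //.
  by rewrite le_max lexx orbT.
apply: le_trans (young_const_le _ _ _ del_gt0 b0 bp _ _ (weight_ge0 s x i s0) w_le) _.
have Kpm0 : 0 <= Kp i * m1 by rewrite mulr_ge0.
have L0 : 0 <= L i by rewrite addr_ge0.
rewrite young_constZ ?mulr_ge0 ?powR_ge0 //.
rewrite powRM ?powR_ge0 // -powRrM ler_wpM2r ?young_const_ge0 //.
apply: ler_pM; rewrite ?powR_ge0 ?powR_le_mexp //.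
apply: le_trans (_ : v `^ p <= _); last exact: powR_max1_le1D (dX_ge0 x) (ltW p_gt0).
rewrite ler_powR // mulrA ler_pdivrMr ?subr_gt0 // mulrC ler_wpM2l ?(ltW p_gt0) //.
by rewrite lerBrDr.
Qed.

Let E := \int[nu]_y expPy y.

Let E_ge1 : 1 <= E.
Proof.
rewrite -(Rintegral_cst_prob nu 1); apply: le_Rintegral => //.
  exact: integrable_EFin_cst.
move=> y _; apply: le_trans (expR_ge1Dx _).
by rewrite lerDl mulr_ge0 ?(ltW lam_gt0).
Qed.

Let M_ge0 : 0 <= M.
Proof.
have := c1_bnd x0; rewrite -(pmulr_lge0 _ (_ : 0 < 1 + Px x0)) ?ltr_pwDl //.
by apply: le_trans; rewrite !addr_ge0.
Qed.

Let integrated_cost_le x s : 1 <= s ->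
  s * (I1 - c1 x + am x) <= (`|I1| + M) * (s `^ mexp * (1 + Px x)).
Proof.
move=> s1; have s0 := le_trans ler01 s1.
have bnd0 : 0 <= (`|I1| + M) * (1 + Px x) by rewrite mulr_ge0 ?addr_ge0.
rewrite mulrCA; apply: le_trans (_ : s * ((`|I1| + M) * (1 + Px x)) <= _).
  apply: ler_wpM2l => //; have := c1_bnd x; have := ap_ge0 x.
  have := ler_norm I1; have := ler_norm (- c1 x); rewrite normrN.
  have : 0 <= `|I1| * Px x by rewrite mulr_ge0.
  rewrite /Px; lra.
by rewrite ler_wpM2r // le_powR_mexp.
Qed.

Let KY := \sum_(i < N) yc i (L i).
Let CB := `|I1| + M + KY + E.

Lemma lne_cconj_integral_le s f x : 1 <= s ->
  mu.-integrable setT (EFin \o f) ->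
  (forall y, cconj mu (scaled_cost s) f y \is a fin_num) ->
  nu.-integrable setT (cconj mu (scaled_cost s) f) ->
  (lne (\int[nu]_y
      (expR (fine (cconj mu (scaled_cost s) f y) - s * c (x, y)))%:E)
    <= (mf f + CB * s `^ mexp * (1 + Px x))%:E)%E.
Proof.
move=> s1 intf fin intg; have s0 := le_trans ler01 s1.
set g := cconj mu _ f.
have mg : measurable_fun setT (fun y => fine (g y)).
  apply/measurable_EFinP; rewrite (_ : EFin \o _ = g); first exact: measurable_int intg.
  by apply/funext => y; rewrite /comp fineK.
set A := s * (I1 - c1 x + am x) + \sum_(i < N) yc i (weight s x i).
apply: le_trans (lne_integral_expR_le nu _ (fun y => lam * Py y) (mf f + A) _ _ _ _) _.
- by apply: measurable_funB; [exact: mg|exact: c_measurable_y].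
- exact: int_expPy.
- by move=> y; rewrite mulr_ge0 ?(ltW lam_gt0).
- by move=> y; rewrite addrA; exact: cconj_sub_cost_le.
rewrite lee_fin -addrA lerD2l.
have Pxs0 : 0 <= s `^ mexp * (1 + Px x) by rewrite mulr_ge0 ?powR_ge0 ?addr_ge0.
have Pxs1 : 1 <= s `^ mexp * (1 + Px x).
  apply: mulr_ege1; first exact: le_trans s1 (le_powR_mexp _ s1).
  by rewrite lerDl.
have cost_part := integrated_cost_le x _ s1.
have young_part : \sum_(i < N) yc i (weight s x i) <= KY * (s `^ mexp * (1 + Px x)).
  rewrite /KY mulr_suml; apply: ler_sum => i _; rewrite mulrC.
  exact: young_weight_le.
have ln_part : ln E <= E * (s `^ mexp * (1 + Px x)).
  apply: le_trans (ltW (ln_sublinear (lt_le_trans ltr01 E_ge1))) _.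
  by rewrite ler_peMr ?(le_trans ler01 E_ge1).
have -> : CB * s `^ mexp * (1 + Px x)
    = (`|I1| + M) * (s `^ mexp * (1 + Px x)) + KY * (s `^ mexp * (1 + Px x))
      + E * (s `^ mexp * (1 + Px x)) by rewrite /CB; ring.
by rewrite /A; lra.
Qed.

Let I2 := \int[nu]_y c2 y.
Let m2 := \int[nu]_y (1 + Py y).
Let CC := M + `|I2| + Ksum * m2.

Let int_1Py : nu.-integrable setT (EFin \o (fun y => 1 + Py y)).
Proof. exact: integrableD_EFin (integrable_EFin_cst _ _) int_Py. Qed.

Lemma oppe_lne_cconj_integral_le s f x : 1 <= s ->
  (forall y, cconj mu (scaled_cost s) f y \is a fin_num) ->
  nu.-integrable setT (cconj mu (scaled_cost s) f) ->
  (- lne (\int[nu]_y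
      (expR (fine (cconj mu (scaled_cost s) f y) - s * c (x, y)))%:E)
    <= \int[nu]_y negpart (cconj mu (scaled_cost s) f y)
       + (CC * s `^ mexp * (1 + Px x))%:E)%E.
Proof.
move=> s1 fin intg; have s0 := le_trans ler01 s1.
set g := cconj mu _ f.
have int_fg : nu.-integrable setT (EFin \o (fun y => fine (g y))).
  by rewrite (_ : EFin \o _ = g) //; apply/funext => y; rewrite /comp fineK.
pose h y := (c1 x + ap x) + c2 y + Ksum * (1 + Px x) * (1 + Py y).
have int_h : nu.-integrable setT (EFin \o h).
  apply: integrableD_EFin; last exact: integrableZl_EFin.
  exact: integrableD_EFin (integrable_EFin_cst _ _) int_c2.
have -> : (\int[nu]_y negpart (g y) = \int[nu]_y negpart (fine (g y))%:E)%E.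
  by apply: eq_integral => y _; rewrite fineK.
apply: le_trans (oppe_lne_integral_expR_le nu (fun y => fine (g y))
  (fun y => s * h y) _ _ _ _ _) _ => //.
- exact: integrableZl_EFin.
- by apply: measurable_funB; [exact/measurable_EFinP/(measurable_int nu)|
    exact: c_measurable_y].
- move=> y; rewrite lerB // ler_wpM2l // /h; have := cost_le x y.
  have := ler_wpM2r (addr_ge0 ler01 (Px_ge0 x)) (S_le y); lra.
rewrite leeD2l ?integral_negpart_fin_num // lee_fin RintegralZl //.
rewrite Rintegral_affine // -/I2 -/m2.
rewrite (_ : CC * _ * _ = s `^ mexp * (CC * (1 + Px x))); last by ring.
have bnd0 : 0 <= CC * (1 + Px x).
  by rewrite mulr_ge0 ?addr_ge0 ?mulr_ge0 // Rintegral_ge0 // => y _; rewrite addr_ge0.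
apply: le_trans (_ : s * (CC * (1 + Px x)) <= _); last first.
  exact: ler_wpM2r (le_powR_mexp _ s1).
apply: ler_wpM2l => //; have := c1_bnd x; have := am_ge0 x.
have := ler_norm I2; have := ler_norm (c1 x).
have : 0 <= `|I2| * Px x by rewrite mulr_ge0.
rewrite /CC /Px; lra.
Qed.

Let CB_ge0 : 0 <= CB.
Proof.
rewrite /CB !addr_ge0 // ?(le_trans ler01 E_ge1) //.
by apply: sumr_ge0 => i _; rewrite young_const_ge0 // addr_ge0 ?mulr_ge0.
Qed.

Let CC_ge0 : 0 <= CC.
Proof.
by rewrite /CC !addr_ge0 ?mulr_ge0 // Rintegral_ge0 // => y _; rewrite addr_ge0.
Qed.

Lemma abse_cconj2_le : exists K : R, forall s, 1 <= s ->
  forall f : X -> R, mu.-integrable setT (EFin \o f) ->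
  (forall y, cconj mu (scaled_cost s) f y \is a fin_num) ->
  nu.-integrable setT (cconj mu (scaled_cost s) f) -> forall x,
  (`| cconj2 nu (scaled_cost s) (cconj mu (scaled_cost s) f) x |
    <= \int[mu]_x' negpart (f x')%:E
       + \int[nu]_y negpart (cconj mu (scaled_cost s) f y)
       + (K * s `^ mexp * (1 + dX x x0 `^ p))%:E)%E.
Proof.
exists (CB + CC) => s s1 f intf fin intg x.
have up := lne_cconj_integral_le s f x s1 intf fin intg.
have lo := oppe_lne_cconj_integral_le s f x s1 fin intg.
rewrite cconj2E //; move: up lo; set g := cconj mu _ f.
have a_fin := integral_negpart_fin_num mu f intf.
have b_fin : (\int[nu]_y negpart (g y))%E \is a fin_num.
  have := integrable_fin_num measurableT (integrable_funeneg measurableT intg).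
  by rewrite (eq_integral (fun y => negpart (g y))) // => y _; rewrite funenegE.
have a0 : 0 <= mf f by rewrite fine_ge0 ?integral_negpart_ge0.
have b0 : 0 <= fine (\int[nu]_y negpart (g y))%E.
  by rewrite fine_ge0 ?integral_negpart_ge0.
have sPx0 : 0 <= s `^ mexp * (1 + Px x) by rewrite mulr_ge0 ?powR_ge0 ?addr_ge0.
have CB0 : 0 <= CB * s `^ mexp * (1 + Px x) by rewrite -mulrA mulr_ge0.
have CC0 : 0 <= CC * s `^ mexp * (1 + Px x) by rewrite -mulrA mulr_ge0.
rewrite -(fineK a_fin) -(fineK b_fin) -!EFinD -/(mf f).
rewrite (_ : (CB + CC) * _ * _ = CB * s `^ mexp * (1 + Px x)
  + CC * s `^ mexp * (1 + Px x)); last by rewrite /Px; ring.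
case: (lne _) => [r| |] /=.
- by rewrite !lee_fin => up lo; rewrite ler_norml; apply/andP; split; lra.
- by rewrite leNgt ltry.
- by move=> _; rewrite leNgt ltry.
Qed.
End conjugate_bounds.

Theorem theorem5p7 (R : realType) (d1 d2 : measure_display)
  (X : measurableType d1) (Y : measurableType d2)
  (dX : X -> X -> R) (dY : Y -> Y -> R) (x0 : X) (y0 : Y)
  (mu : probability X R) (nu : probability Y R)
  (c : X * Y -> R) (c1 : X -> R) (c2 : Y -> R) (chat : X -> Y -> R)
  (p : R) (N : nat) (alpha beta Kp Km : 'I_N -> R) (ap am : X -> R) :
  polish_metric_space dX -> polish_metric_space dY ->
  measurable_fun setT c ->
  0 < p ->
  (exists2 lam : R, 0 < lam &
     (\int[nu]_y (expR (lam * (dY y y0) `^ p))%:E < +oo)%E) ->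
  (forall i, 0 <= alpha i <= p) ->
  (forall i, 0 <= beta i < p) ->
  (forall i, alpha i + beta i <= p) ->
  (forall i, 0 <= Kp i) -> (forall i, 0 <= Km i) ->
  (forall x, 0 <= ap x) -> (forall x, 0 <= am x) ->
  measurable_fun setT ap -> measurable_fun setT am ->
  mu.-integrable setT (EFin \o ap) ->
  mu.-integrable setT (EFin \o c1) -> nu.-integrable setT (EFin \o c2) ->
  (forall x y, c (x, y) = c1 x + c2 y + chat x y) ->
  (forall x y,
     - am x - \sum_(i < N) Km i * (dX x x0) `^ (alpha i) * (dY y y0) `^ (beta i)
       <= chat x y) ->
  (forall x y,
     chat x y <= ap x + \sum_(i < N) Kp i * (dX x x0) `^ (alpha i) * (dY y y0) `^ (beta i)) ->
  (\int[mu]_x ((dX x x0) `^ p)%:E < +oo)%E ->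
  (exists M : R, (forall x, `|c1 x| + ap x + am x <= M * (1 + (dX x x0) `^ p)) /\
                 (forall y, `|c2 y| <= M * (1 + (dY y y0) `^ p))) ->
  exists K : R,
    (forall f : X -> R,
       mu.-integrable setT (EFin \o f) ->
       (forall y, cconj mu c f y \is a fin_num) ->
       nu.-integrable setT (cconj mu c f) ->
       forall x,
         (`| cconj2 nu c (cconj mu c f) x |
           <= \int[mu]_x' negpart (f x')%:E + \int[nu]_y negpart (cconj mu c f y)
              + (K * (1 + (dX x x0) `^ p))%:E)%E)
    /\
    (forall eps : R, 0 < eps < 1 ->
       let ceps := fun xy : X * Y => c xy / eps in
       let a := p - \big[Num.max/0]_(i < N) beta i in
       let Kt := eps `^ (- Num.max (p / a) 1) * K in
       forall f : X -> R,
       mu.-integrable setT (EFin \o f) ->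
       (forall y, cconj mu ceps f y \is a fin_num) ->
       nu.-integrable setT (cconj mu ceps f) ->
       forall x,
         (`| cconj2 nu ceps (cconj mu ceps f) x |
           <= \int[mu]_x' negpart (f x')%:E + \int[nu]_y negpart (cconj mu ceps f y)
              + (Kt * (1 + (dX x x0) `^ p))%:E)%E).
Proof.
move=> pX pY mc p_gt0 [lam lam_gt0 expPy_lty] alpha_bnd beta_bnd alpha_beta
  Kp_ge0 Km_ge0 ap_ge0 am_ge0 _ _ int_ap int_c1 int_c2 c_split chat_ge chat_le
  Px_lty [M [c1_bnd _]].
have [K bound] := abse_cconj2_le pX pY mc p_gt0 lam_gt0 expPy_lty alpha_bnd
  beta_bnd alpha_beta Kp_ge0 Km_ge0 ap_ge0 am_ge0 int_ap int_c1 int_c2 c_split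
  chat_ge chat_le Px_lty c1_bnd.
exists K; split.
- move=> f; have -> : c = (fun xy => 1 * c xy) by apply/funext => xy; rewrite mul1r.
  by move=> /bound/[apply]/[apply]; rewrite powR1 mulr1; apply.
- move=> eps /andP[eps_gt0 eps_lt1] ceps a Kt f.
  have -> : ceps = (fun xy => eps^-1 * c xy) by apply/funext => xy; rewrite mulrC.
  have -> : Kt = K * eps^-1 `^ Num.max (p / a) 1.
    rewrite /Kt mulrC powRN; congr (_ * _); set m := Num.max _ _.
    apply: (@mulIf _ (eps `^ m)); first by rewrite gt_eqF ?powR_gt0.
    rewrite mulVf ?gt_eqF ?powR_gt0 // -powRM ?invr_ge0 ?ltW //.
    by rewrite mulVf ?gt_eqF // powR1.
  by apply: bound; rewrite invf_ge1 ?ltW.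
Qed.
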